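(* Let $\Omega\subset\mathbb{R}^d$ be open and $H:\overline\Omega\times\mathbb{R}^d\to\mathbb{R}$ be such that for a.e. $x\in\Omega$, $H(x,\cdot)\in C^1(\mathbb{R}^d)$ and $H(x,\cdot)$ is convex, and suppose there is $C>1$ with $|D_pH(x,p)|\le C|p|^{\alpha-1}+C$ and $H(x,0)\le C$ for a.e. $x\in\Omega$ and all $p\in\mathbb{R}^d$, where $\alpha>1$. Consider the conditions, each required for a.e. $x\in\Omega$ and all $p\in\mathbb{R}^d$ with some constant $C>1$: (a) $H(x,p)\ge C^{-1}|p|^\alpha-C$; (b) $D_pH(x,p)\cdot p\ge C^{-1}|p|^\alpha-C$ and $H(x,p)\ge-C$; (c) $-H(x,p)+D_pH(x,p)\cdot p\ge C^{-1}|p|^\alpha-C$ and $H(x,p)\ge-C$. Then (a), (b), (c) are equivalent (with the constant $C$ possibly changing). *)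

From HB Require Import structures.
From mathcomp Require Import all_boot all_order all_algebra.
From mathcomp Require Import all_classical all_reals all_analysis.
Set Implicit Arguments. Unset Strict Implicit. Unset Printing Implicit Defensive.
Import Order.TTheory GRing.Theory Num.Theory.
Import numFieldNormedType.Exports.
Local Open Scope classical_set_scope.
Local Open Scope ring_scope.

Section Defs.
Variables (R : realType) (d : nat).

Definition vdot (p q : 'rV[R]_d) : R := \sum_(i < d) p ord0 i * q ord0 i.
Definition enorm (p : 'rV[R]_d) : R := Num.sqrt (vdot p p).

Definition box (a b : 'rV[R]_d) : set 'rV[R]_d :=
  [set x | forall i, a ord0 i <= x ord0 i <= b ord0 i].
Definition box_vol (a b : 'rV[R]_d) : R :=
  \prod_(i < d) Num.max 0 (b ord0 i - a ord0 i).

Definition lebesgue_null (N : set 'rV[R]_d) : Prop :=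
  forall eps : R, 0 < eps -> exists a b : nat -> 'rV[R]_d,
    N `<=` \bigcup_k box (a k) (b k) /\
    forall n, \sum_(k < n) box_vol (a k) (b k) <= eps.

Definition ae_in (Omega : set 'rV[R]_d) (P : 'rV[R]_d -> Prop) : Prop :=
  exists N, lebesgue_null N /\ forall x, Omega x -> ~ N x -> P x.

Definition convex_fun (f : 'rV[R]_d -> R) : Prop :=
  forall (p q : 'rV[R]_d) (t : R), 0 <= t <= 1 ->
    f ((1 - t) *: p + t *: q) <= (1 - t) * f p + t * f q.

Definition C1_with_gradient (f : 'rV[R]_d -> R) (g : 'rV[R]_d -> 'rV[R]_d) : Prop :=
  (forall p, differentiable f p /\ forall h, 'd f p h = vdot (g p) h) /\
  continuous g.

Definition cond_a (Omega : set 'rV[R]_d) (H : 'rV[R]_d -> 'rV[R]_d -> R)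
    (alpha C : R) : Prop :=
  ae_in Omega (fun x => forall p, H x p >= C^-1 * enorm p `^ alpha - C).

Definition cond_b (Omega : set 'rV[R]_d) (H : 'rV[R]_d -> 'rV[R]_d -> R)
    (DH : 'rV[R]_d -> 'rV[R]_d -> 'rV[R]_d) (alpha C : R) : Prop :=
  ae_in Omega (fun x => forall p,
    vdot (DH x p) p >= C^-1 * enorm p `^ alpha - C /\ H x p >= - C).

Definition cond_c (Omega : set 'rV[R]_d) (H : 'rV[R]_d -> 'rV[R]_d -> R)
    (DH : 'rV[R]_d -> 'rV[R]_d -> 'rV[R]_d) (alpha C : R) : Prop :=
  ae_in Omega (fun x => forall p,
    - H x p + vdot (DH x p) p >= C^-1 * enorm p `^ alpha - C /\ H x p >= - C).

End Defs.

(* The subgradient inequality [H(q) >= H(p) + DH(p).(q - p)] of the convex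
   C^1 function [H(x,.)], used along the ray through [p], gives everything.
   With [q = 0] it reads [DH(p).p >= H(p) - H(0)], so (a) implies (b); from
   [p/2] to [p] it reads [H(p) >= H(p/2) + DH(p/2).p/2], so (b) implies (a).
   From [p] to [mu p] it gives [-H(p) + DH(p).p >= mu DH(p).p - H(mu p)], while
   the growth bound on [DH] and [H(0) <= C] give
   [H(mu p) <= C' + 2 C mu^alpha |p|^alpha]; for [mu] small this is absorbed
   by half of [mu DH(p).p], so (b) implies (c). Finally (c) implies (b) because
   [H >= -C]. *)

From HB Require Import structures.
From mathcomp Require Import all_boot all_order all_algebra.
From mathcomp Require Import all_classical all_reals all_analysis.
From mathcomp Require Import ring lra.
Set Implicit Arguments. Unset Strict Implicit. Unset Printing Implicit Defensive.
Import Order.TTheory GRing.Theory Num.Theory.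
Import numFieldNormedType.Exports.
Local Open Scope classical_set_scope.
Local Open Scope ring_scope.

Section Euclidean.
Variables (R : realType) (d : nat).
Implicit Types (a b : 'rV[R]_d).

Lemma vdotC a b : vdot a b = vdot b a.
Proof. by apply: eq_bigr => i _; rewrite mulrC. Qed.

Lemma vdotZr a b (k : R) : vdot a (k *: b) = k * vdot a b.
Proof. by rewrite /vdot mulr_sumr; apply: eq_bigr => i _; rewrite mxE mulrCA. Qed.

Lemma vdot_self_ge0 a : 0 <= vdot a a.
Proof. by apply: sumr_ge0 => i _; rewrite -expr2 sqr_ge0. Qed.

Lemma vdot_self_eq0 a b : vdot a a = 0 -> vdot a b = 0.
Proof.
move=> /eqP; rewrite psumr_eq0 => [/allP a0|i _]; last by rewrite -expr2 sqr_ge0.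
apply: big1 => i _; move: (a0 i (mem_index_enum i)).
by rewrite mulf_eq0 orbb => /eqP ->; rewrite mul0r.
Qed.

Lemma enorm_ge0 a : 0 <= enorm a.
Proof. exact: sqrtr_ge0. Qed.

Lemma sqr_enorm a : enorm a ^+ 2 = vdot a a.
Proof. exact/sqr_sqrtr/vdot_self_ge0. Qed.

Lemma enormZ a (k : R) : 0 <= k -> enorm (k *: a) = k * enorm a.
Proof.
move=> k0; rewrite /enorm vdotZr vdotC vdotZr mulrA sqrtrM ?mulr_ge0 //.
by rewrite -expr2 sqrtr_sqr ger0_norm.
Qed.

Lemma cauchy_schwarz a b : vdot a b <= enorm a * enorm b.
Proof.
have [a0|a_neq0] := eqVneq (enorm a) 0.
  by rewrite vdot_self_eq0 ?a0 ?mul0r // -sqr_enorm a0 expr0n.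
have [b0|b_neq0] := eqVneq (enorm b) 0.
  by rewrite vdotC vdot_self_eq0 ?b0 ?mulr0 // -sqr_enorm b0 expr0n.
set sa := enorm a; set sb := enorm b.
have sab_gt0 : 0 < 2 * (sa * sb) by rewrite !mulr_gt0 // lt0r ?a_neq0 ?b_neq0 enorm_ge0.
(* termwise AM-GM: [2 x y sa sb <= x^2 sb^2 + y^2 sa^2] *)
have : vdot a b * (2 * (sa * sb)) <= vdot a a * sb ^+ 2 + vdot b b * sa ^+ 2.
  rewrite /vdot !mulr_suml -big_split /=; apply: ler_sum => i _.
  have := sqr_ge0 (a ord0 i * sb - b ord0 i * sa); nra.
rewrite -!sqr_enorm -/sa -/sb => termwise.
rewrite -(ler_pM2r sab_gt0); apply: (le_trans termwise).
by have -> : sa * sb * (2 * (sa * sb)) = sa ^+ 2 * sb ^+ 2 + sb ^+ 2 * sa ^+ 2 by ring.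
Qed.

End Euclidean.

Section AlmostEverywhere.
Variables (R : realType) (d : nat) (Omega : set 'rV[R]_d).

Lemma box_vol_ge0 (a b : 'rV[R]_d) : 0 <= box_vol a b.
Proof. by apply: prodr_ge0 => i _; rewrite le_max lexx. Qed.

(* interleave the two covers: even boxes cover N1, odd boxes cover N2 *)
Lemma lebesgue_nullU (N1 N2 : set 'rV[R]_d) :
  lebesgue_null N1 -> lebesgue_null N2 -> lebesgue_null (N1 `|` N2).
Proof.
move=> null1 null2 e e_gt0.
have [a1 [b1 [cover1 vol1]]] := null1 _ (divr_gt0 e_gt0 (ltr0n _ 2)).
have [a2 [b2 [cover2 vol2]]] := null2 _ (divr_gt0 e_gt0 (ltr0n _ 2)).
pose a k := if odd k then a2 k./2 else a1 k./2.
pose b k := if odd k then b2 k./2 else b1 k./2.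
exists a, b; split.
  move=> x [/cover1 [k _ xk]|/cover2 [k _ xk]].
    by exists k.*2 => //; rewrite /a /b odd_double doubleK.
  by exists k.*2.+1 => //; rewrite /a /b /= odd_double /= uphalf_double.
have vol_double m : \sum_(k < m.*2) box_vol (a k) (b k) =
    \sum_(k < m) box_vol (a1 k) (b1 k) + \sum_(k < m) box_vol (a2 k) (b2 k).
  elim: m => [|m IH]; first by rewrite !big_ord0 addr0.
  rewrite doubleS !big_ord_recr /= IH /a /b /= odd_double /= doubleK uphalf_double.
  by rewrite addrACA -!addrA.
move=> n; have vol_mono := @nondecreasing_series R (fun k => box_vol (a k) (b k)) predT 0.
have n_le_2n : (n <= n.*2)%N by rewrite -addnn leq_addr.
have := vol_mono (fun k _ _ => box_vol_ge0 _ _) n n.*2 n_le_2n.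
rewrite /= !big_mkord vol_double.
have := vol1 n; have := vol2 n; lra.
Qed.

Lemma ae_inI (P Q : 'rV[R]_d -> Prop) :
  ae_in Omega P -> ae_in Omega Q -> ae_in Omega (fun x => P x /\ Q x).
Proof.
move=> [N1 [null1 P_N1]] [N2 [null2 Q_N2]]; exists (N1 `|` N2).
split; first exact: lebesgue_nullU.
by move=> x Ox notN; split; [apply: P_N1 | apply: Q_N2] => // ?; apply: notN; [left|right].
Qed.

Lemma ae_in_mono (P Q : 'rV[R]_d -> Prop) :
  (forall x, P x -> Q x) -> ae_in Omega P -> ae_in Omega Q.
Proof. by move=> PQ [N [nullN P_N]]; exists N; split=> // x Ox notN; apply/PQ/P_N. Qed.

End AlmostEverywhere.

Section Subgradient.
Variables (R : realType) (d : nat).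
Implicit Types (f h : 'rV[R]_d -> R) (g : 'rV[R]_d -> 'rV[R]_d) (p q : 'rV[R]_d).

(* the difference quotients of a convex function along [q - p] on (0, 1] are
   bounded by [f q - f p], hence so is their limit, the directional derivative *)
Lemma convex_tangent_le f p q :
  convex_fun f -> differentiable f p -> f p + 'd f p (q - p) <= f q.
Proof.
move=> f_cvx f_diff.
have := cvg_dnbhs_at_right (@diff_derivable _ _ _ _ _ (q - p) f_diff).
rewrite -/(derive f p (q - p)) deriveE // => quotient_cvg.
rewrite addrC -lerBrDr.
apply: (cvgr_to_le quotient_cvg); near=> t.
have t_gt0 : 0 < t by near: t; exact: nbhs_right_gt.
have t_le1 : t <= 1 by near: t; exact: nbhs_right_le.
rewrite /= /shift /=.
have -> : t *: (q - p) + p = (1 - t) *: p + t *: q.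
  by rewrite scalerBr scalerBl scale1r addrC addrA [RHS]addrAC.
have := f_cvx p q t; rewrite t_le1 ltW //= => /(_ isT) f_chord.
rewrite -[leRHS](mulKf (lt0r_neq0 t_gt0)) ler_pM2l ?invr_gt0 //; lra.
Unshelve. all: by end_near.
Qed.

Definition is_subgradient h g := forall p q, h p + vdot (g p) (q - p) <= h q.

Lemma C1_convex_subgradient h g :
  C1_with_gradient h g -> convex_fun h -> is_subgradient h g.
Proof.
move=> [h_diff _] h_cvx p q; have [hp_diff dh_p] := h_diff p.
by rewrite -dh_p; exact: convex_tangent_le.
Qed.

Lemma subgradient_ray h g p (s t : R) : is_subgradient h g ->
  h (s *: p) + (t - s) * vdot (g (s *: p)) p <= h (t *: p).
Proof. by move=> /(_ (s *: p) (t *: p)); rewrite -scalerBl vdotZr. Qed.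

End Subgradient.

Lemma le_1D_powR (R : realType) (x a : R) : 0 <= x -> 1 <= a -> x <= 1 + x `^ a.
Proof.
move=> x_ge0 a_ge1; have := powR_ge0 x a.
have [x_le1|x_gt1] := lerP x 1; first lra.
by have := le1r_powR (ltW x_gt1) a_ge1; lra.
Qed.

Lemma merge_constants (R : realType) (c B : R) : 0 < c ->
  exists2 K : R, 1 < K & K^-1 <= c /\ B <= K.
Proof.
move=> c_gt0; have cV_gt0 : 0 < c^-1 by rewrite invr_gt0.
have B_le := ler_norm B; have normB_ge0 := normr_ge0 B.
exists (c^-1 + `|B| + 1); first lra.
split; last lra.
by rewrite -[leRHS]invrK lef_pV2 ?posrE //; lra.
Qed.

Section Coercive.
Variables (R : realType) (d : nat) (alpha : R).

Definition coercive (c B : R) (f : 'rV[R]_d -> R) :=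
  forall p, c * enorm p `^ alpha - B <= f p.

Lemma coerciveW (c c' B B' : R) f : c' <= c -> B <= B' ->
  coercive c B f -> coercive c' B' f.
Proof.
move=> c'_le_c B_le_B' f_lb p; have := f_lb p.
have := ler_wpM2r (powR_ge0 (enorm p) alpha) c'_le_c; lra.
Qed.

Lemma coercive_geN (c B : R) f : 0 <= c -> coercive c B f -> forall p, - B <= f p.
Proof.
move=> c_ge0 f_lb p; have := f_lb p.
have := mulr_ge0 c_ge0 (powR_ge0 (enorm p) alpha); lra.
Qed.

End Coercive.

Section SubgradientCoercive.
Variables (R : realType) (d : nat) (alpha : R).
Variables (h : 'rV[R]_d -> R) (g : 'rV[R]_d -> 'rV[R]_d).
Hypothesis h_subgrad : is_subgradient h g.
Let dot p := vdot (g p) p.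

Lemma coercive_dot (c B : R) :
  coercive alpha c B h -> coercive alpha c (B + h 0) dot.
Proof.
move=> h_lb p; have := subgradient_ray p 1 0 h_subgrad.
rewrite scale1r scale0r sub0r mulN1r; have := h_lb p; rewrite /dot; lra.
Qed.

Lemma coercive_of_dot (c B : R) : coercive alpha c B dot -> (forall p, - B <= h p) ->
  coercive alpha (c * 2^-1 `^ alpha) (B + B) h.
Proof.
move=> dot_lb h_geN p; have := subgradient_ray p 2^-1 1 h_subgrad.
have := dot_lb (2^-1 *: p); have := h_geN (2^-1 *: p).
rewrite scale1r /dot vdotZr enormZ ?powRM ?invr_ge0 ?enorm_ge0 //; lra.
Qed.

Section Growth.
Variable C0 : R.
Hypothesis alpha_gt1 : 1 < alpha.
Hypothesis C0_ge0 : 0 <= C0.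
Hypothesis g_growth : forall p, enorm (g p) <= C0 * enorm p `^ (alpha - 1) + C0.
Let alpha_gt0 : 0 < alpha := lt_trans ltr01 alpha_gt1.

Lemma subgradient_growth_ub q : h q <= h 0 + C0 + 2 * C0 * enorm q `^ alpha.
Proof.
have := subgradient_ray q 1 0 h_subgrad; rewrite scale1r scale0r sub0r mulN1r.
have := cauchy_schwarz (g q) q.
have : enorm (g q) * enorm q <= C0 * enorm q `^ alpha + C0 * enorm q.
  rewrite -(mulr_powRB1 (enorm_ge0 q) alpha_gt0).
  by have := ler_wpM2r (enorm_ge0 q) (g_growth q); rewrite mulrDl -mulrA (mulrC (_ `^ _)).
have := ler_wpM2l C0_ge0 (le_1D_powR (enorm_ge0 q) (ltW alpha_gt1)).
lra.
Qed.

(* for such [mu], the bound [2 C0 mu^alpha |p|^alpha] on the growth of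
   [h (mu p)] costs at most half of [mu * dot p] *)
Lemma coercive_conj (c B mu : R) : 0 < mu -> 4 * C0 * mu `^ (alpha - 1) <= c ->
  coercive alpha c B dot ->
  coercive alpha (mu * c / 2) (mu * B + h 0 + C0) (fun p => - h p + dot p).
Proof.
move=> mu_gt0 mu_small dot_lb p.
have := subgradient_ray p 1 mu h_subgrad; rewrite scale1r.
have := subgradient_growth_ub (mu *: p).
rewrite (enormZ _ (ltW mu_gt0)) (powRM _ (ltW mu_gt0) (enorm_ge0 p)).
rewrite -[mu `^ alpha](mulr_powRB1 (ltW mu_gt0) alpha_gt0).
set X := enorm p `^ alpha; have X_ge0 : 0 <= X := powR_ge0 _ _.
have := ler_wpM2l (mulr_ge0 (ltW mu_gt0) X_ge0) mu_small.
have := ler_wpM2l (ltW mu_gt0) (dot_lb p).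
rewrite /dot -/X; nra.
Qed.

End Growth.
End SubgradientCoercive.

Section Equivalence.
Variables (R : realType) (d : nat) (Omega : set 'rV[R]_d).
Variables (H : 'rV[R]_d -> 'rV[R]_d -> R) (DH : 'rV[R]_d -> 'rV[R]_d -> 'rV[R]_d).
Variables (alpha C0 C : R).
Hypothesis alpha_gt1 : 1 < alpha.
Hypothesis C0_gt0 : 0 < C0.
Hypothesis C_gt1 : 1 < C.
Hypothesis H_subgrad : ae_in Omega (fun x => is_subgradient (H x) (DH x)).
Hypothesis H_growth : ae_in Omega (fun x =>
  (forall p, enorm (DH x p) <= C0 * enorm p `^ (alpha - 1) + C0) /\ H x 0 <= C0).
Let CV_gt0 : 0 < C^-1. Proof. by rewrite invr_gt0 (lt_trans ltr01 C_gt1). Qed.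

Lemma cond_a_cond_b : cond_a Omega H alpha C ->
  exists K, 1 < K /\ cond_b Omega H DH alpha K.
Proof.
move=> condA; have [K K_gt1 [KV_le KC_le]] := merge_constants (C + C0) CV_gt0.
exists K; split=> //; apply: ae_in_mono (ae_inI (ae_inI H_subgrad H_growth) condA).
move=> x [[Hx_subgrad [_ Hx0_le]] Hx_lb] p.
have B_le : C + H x 0 <= K by lra.
split; first exact: coerciveW KV_le B_le (coercive_dot Hx_subgrad Hx_lb) p.
by have := coercive_geN (ltW CV_gt0) Hx_lb p; have := C0_gt0; lra.
Qed.

Lemma cond_b_cond_a : cond_b Omega H DH alpha C ->
  exists K, 1 < K /\ cond_a Omega H alpha K.
Proof.
move=> condB; have c_gt0 : 0 < C^-1 * 2^-1 `^ alpha by rewrite mulr_gt0 ?powR_gt0.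
have [K K_gt1 [KV_le KC_le]] := merge_constants (C + C) c_gt0.
exists K; split=> //; apply: ae_in_mono (ae_inI H_subgrad condB) => x [Hx_subgrad Hx_lb].
have Hx_lb' := coercive_of_dot Hx_subgrad (fun p => (Hx_lb p).1) (fun p => (Hx_lb p).2).
exact: coerciveW KV_le KC_le Hx_lb'.
Qed.

Lemma cond_b_cond_c : cond_b Omega H DH alpha C ->
  exists K, 1 < K /\ cond_c Omega H DH alpha K.
Proof.
move=> condB; pose mu := (C^-1 / (4 * C0)) `^ (alpha - 1)^-1.
have mu_gt0 : 0 < mu by rewrite powR_gt0 // divr_gt0 // mulr_gt0.
have mu_small : 4 * C0 * mu `^ (alpha - 1) <= C^-1.
  rewrite -powRrM mulVf ?powRr1 ?subr_eq0 ?gt_eqF //; last by rewrite divr_ge0 ?mulr_ge0 ?ltW.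
  by rewrite mulrC divfK ?mulf_neq0 ?gt_eqF.
have c_gt0 : 0 < mu * C^-1 / 2 by rewrite divr_gt0 ?mulr_gt0.
have [K K_gt1 [KV_le KB_le]] := merge_constants (mu * C + C0 + C0 + C) c_gt0.
exists K; split=> //; apply: ae_in_mono (ae_inI (ae_inI H_subgrad H_growth) condB).
move=> x [[Hx_subgrad [Hx_growth Hx0_le]] Hx_lb] p.
have Hx_conj := coercive_conj Hx_subgrad alpha_gt1 (ltW C0_gt0) Hx_growth mu_gt0 mu_small
  (fun p => (Hx_lb p).1).
have muC_ge0 : 0 <= mu * C by rewrite mulr_ge0 ?ltW // (lt_trans ltr01 C_gt1).
have B_le : mu * C + H x 0 + C0 <= K by have := C_gt1; lra.
split; first exact: coerciveW KV_le B_le Hx_conj p.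
by have := (Hx_lb p).2; have := C0_gt0; lra.
Qed.

Lemma cond_c_cond_b : cond_c Omega H DH alpha C ->
  exists K, 1 < K /\ cond_b Omega H DH alpha K.
Proof.
move=> condC; have [K K_gt1 [KV_le KC_le]] := merge_constants (C + C) CV_gt0.
exists K; split=> //; apply: ae_in_mono condC => x Hx_lb p.
have [Hx_conj Hx_geN] := Hx_lb p.
have := ler_wpM2r (powR_ge0 (enorm p) alpha) KV_le; split; lra.
Qed.

End Equivalence.

Theorem proposition2p2 (R : realType) (d : nat) (Omega : set 'rV[R]_d)
  (H : 'rV[R]_d -> 'rV[R]_d -> R) (DH : 'rV[R]_d -> 'rV[R]_d -> 'rV[R]_d)
  (alpha : R) :
  open Omega -> 1 < alpha ->
  ae_in Omega (fun x => C1_with_gradient (H x) (DH x) /\ convex_fun (H x)) ->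
  (exists C : R, 1 < C /\ ae_in Omega (fun x =>
     (forall p, enorm (DH x p) <= C * enorm p `^ (alpha - 1) + C) /\ H x 0 <= C)) ->
  ((exists C : R, 1 < C /\ cond_a Omega H alpha C) <->
   (exists C : R, 1 < C /\ cond_b Omega H DH alpha C)) /\
  ((exists C : R, 1 < C /\ cond_b Omega H DH alpha C) <->
   (exists C : R, 1 < C /\ cond_c Omega H DH alpha C)).
Proof.
move=> _ alpha_gt1 H_reg [C0 [C0_gt1 H_growth]].
have C0_gt0 : 0 < C0 := lt_trans ltr01 C0_gt1.
have H_subgrad : ae_in Omega (fun x => is_subgradient (H x) (DH x)).
  by apply: ae_in_mono H_reg => x [H_C1 H_cvx]; exact: C1_convex_subgradient.
split; split=> -[C [C_gt1 condC]].
- exact: cond_a_cond_b C0_gt0 C_gt1 H_subgrad H_growth condC.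
- exact: cond_b_cond_a C_gt1 H_subgrad condC.
- exact: cond_b_cond_c alpha_gt1 C0_gt0 C_gt1 H_subgrad H_growth condC.
- exact: cond_c_cond_b C_gt1 condC.
Qed.
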